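(* Let $G$ be a crossing closed graph on $[n]$, let $\unlhd$ be a total order on $E(G)$, and let $S$ be a noncrossing NBC set of $G$ (with respect to $\unlhd$). Viewing each edge of $S$ as the bond with that single edge, the join $\bigvee S$ computed in $L_G$ equals the join $\bigvee S$ computed in $NC_G$.
   Context: All graphs are finite simple graphs with vertex set $[n]=\{1,\dots,n\}$; edges are written $ij$ with $i<j$. Two edges $a_1a_2$ and $b_1b_2$ cross if $a_1<b_1<a_2<b_2$ or $b_1<a_1<b_2<a_2$. A spanning subgraph is identified with its edge set. A bond of $G$ is a spanning subgraph each of whose connected components is an induced subgraph of $G$; for a bond $H$, $\pi(H)$ is the partition of $[n]$ into vertex sets of its components. A set partition is crossing if there are distinct blocks $B,B'$ and $a,c\in B$, $b,d\in B'$ with $a<b<c<d$, noncrossing otherwise; $H$ is noncrossing if $\pi(H)$ is. $L_G$ is the lattice of all bonds ordered by inclusion of edge sets, $NC_G$ the subposet of noncrossing bonds. Two crossing edges $e,f$ are crossing closed if among all induced connected subgraphs of $G$ containing $e$ and $f$ there is a unique minimal one under containment; $G$ is crossing closed if every pair of crossing edges is (in which case $NC_G$ is a lattice). Given the total order $\unlhd$, a broken circuit is the edge set of a cycle of $G$ with its $\unlhd$-smallest edge removed; an NBC set is a set of edges containing no broken circuit; a noncrossing NBC set is an NBC set no two of whose edges cross. *)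

(* Vertices [n] are modelled by 'I_n (0-based, same order). *)
From mathcomp Require Import all_boot.
Set Implicit Arguments. Unset Strict Implicit. Unset Printing Implicit Defensive.

Section Defs.
Variable n : nat.
Notation V := 'I_n.
Notation E := (V * V)%type.

Definition simple_graph (G : {set E}) : bool := [forall e in G, e.1 < e.2].

Definition mk_edge (x y : V) : E := if x < y then (x, y) else (y, x).

Definition adj (H : {set E}) : rel V := fun x y => ((x, y) \in H) || ((y, x) \in H).

Definition conn (H : {set E}) (x y : V) : bool := connect (adj H) x y.

(* bond: spanning subgraph whose components are induced subgraphs of G *)
Definition bond (G H : {set E}) : bool :=
  (H \subset G) && [forall e in G, conn H e.1 e.2 ==> (e \in H)].

Definition noncrossing_bond (G H : {set E}) : bool :=
  bond G H &&
  ~~ [exists a : V, exists b : V, exists c : V, exists d : V,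
        [&& a < b, b < c, c < d, conn H a c, conn H b d & ~~ conn H a b]].

Definition cross (e f : E) : bool :=
  ((e.1 < f.1) && (f.1 < e.2) && (e.2 < f.2)) ||
  ((f.1 < e.1) && (e.1 < f.2) && (f.2 < e.2)).

Definition induced_connected (G : {set E}) (W : {set V}) : bool :=
  [forall x in W, forall y in W,
     connect (fun u v => [&& u \in W, v \in W & adj G u v]) x y].

Definition icsub (G : {set E}) (e f : E) (W : {set V}) : bool :=
  induced_connected G W && [&& e.1 \in W, e.2 \in W, f.1 \in W & f.2 \in W].

(* minimal under containment (induced subgraphs are ordered by vertex sets) *)
Definition icsub_minimal (G : {set E}) (e f : E) (W : {set V}) : bool :=
  icsub G e f W && [forall W' : {set V}, (W' \proper W) ==> ~~ icsub G e f W'].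

Definition crossing_closed_pair (G : {set E}) (e f : E) : Prop :=
  exists W, icsub_minimal G e f W /\
            forall W', icsub_minimal G e f W' -> W' = W.

Definition crossing_closed (G : {set E}) : Prop :=
  forall e f, e \in G -> f \in G -> cross e f -> crossing_closed_pair G e f.

Definition total_order_on (G : {set E}) (le : rel E) : Prop :=
  [/\ {in G, reflexive le}, {in G & &, transitive le},
      {in G &, antisymmetric le} & {in G &, total le}].

Definition cycle_edges (s : seq V) : {set E} :=
  [set mk_edge p.1 p.2 | p in zip s (rot 1 s)].

Definition is_cycle (G C : {set E}) : Prop :=
  exists s : seq V, [/\ uniq s, 3 <= size s, C = cycle_edges s & C \subset G].

Definition broken_circuit (G : {set E}) (le : rel E) (B : {set E}) : Prop :=
  exists C, exists m, [/\ is_cycle G C, m \in C, (forall f, f \in C -> le m f)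
                        & B = C :\ m].

Definition NBC (G : {set E}) (le : rel E) (S : {set E}) : Prop :=
  S \subset G /\ forall B, broken_circuit G le B -> ~ (B \subset S).

Definition noncrossing_NBC (G : {set E}) (le : rel E) (S : {set E}) : Prop :=
  NBC G le S /\ forall e f, e \in S -> f \in S -> ~~ cross e f.

(* J is the join, in the subposet P (ordered by inclusion), of the
   single-edge bonds {e}, e in S *)
Definition is_join_in (P : {set E} -> bool) (S J : {set E}) : Prop :=
  [/\ P J, (forall e, e \in S -> [set e] \subset J)
     & forall K, P K -> (forall e, e \in S -> [set e] \subset K) -> J \subset K].

End Defs.

From mathcomp Require Import all_boot zify.

Set Implicit Arguments.
Unset Strict Implicit.
Unset Printing Implicit Defensive.

(* The join of the single-edge bonds in L_G is the bond closure of S: the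
   edges of G whose endpoints are joined by a path in S.  Its blocks are the
   components of S, and these form a noncrossing partition as soon as no two
   edges of S cross: if a < b < c < d with a ~ c, b ~ d but a !~ b, a path from
   b to d must leave the interval (a, c) through an edge uv of S, and then a
   path from a to c must pass from one side of uv to the other through an edge
   crossing uv.  Hence the join in L_G is already noncrossing, so it is also
   the join in NC_G. *)

Lemma connect_exit (T : finType) (r : rel T) (P : pred T) p q :
  connect r p q -> P p -> ~~ P q ->
  exists u v, [/\ connect r p u, r u v, P u & ~~ P v].
Proof.
move=> /connectP[s]; elim: s p => [|z s IHs] p /= => [_ -> Pq /negP//|].
case/andP=> rpz pzs lastq Pp nPq; have [Pz | nPz] := boolP (P z).
  have [u [v [Czu ruv Pu nPv]]] := IHs z pzs lastq Pz nPq.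
  by exists u, v; split=> //; apply: connect_trans (connect1 rpz) Czu.
by exists p, z; rewrite connect0.
Qed.

Section Connectivity.
Variable n : nat.
Implicit Types (H K : {set 'I_n * 'I_n}) (x y p q : 'I_n).

Lemma adj_sym H : symmetric (adj H).
Proof. by move=> x y; rewrite /adj orbC. Qed.

Lemma conn_sym H : symmetric (conn H).
Proof. exact/sym_connect_sym/adj_sym. Qed.

Lemma conn_trans H : transitive (conn H).
Proof. by move=> y x z; apply: connect_trans. Qed.

Lemma conn_edge H e : e \in H -> conn H e.1 e.2.
Proof. by case: e => x y He; apply: connect1; rewrite /adj He. Qed.

Lemma conn_sub H K x y : H \subset K -> conn H x y -> conn K x y.
Proof.
move=> sHK; apply: connect_sub => u v /orP[] /(subsetP sHK) Ke; apply: connect1;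
by rewrite /adj Ke ?orbT.
Qed.

Lemma conn_exit H (P : pred 'I_n) p q : conn H p q -> P p != P q ->
  exists u v, [/\ adj H u v, conn H p u, conn H p v, P u & ~~ P v].
Proof.
have exit_from x y : conn H x y -> P x -> ~~ P y ->
    exists u v, [/\ adj H u v, conn H x u, conn H x v, P u & ~~ P v].
  move=> Cxy Px nPy; have [u [v [Cxu Auv Pu nPv]]] := connect_exit Cxy Px nPy.
  by exists u, v; split=> //; apply: conn_trans Cxu (connect1 Auv).
move=> Cpq; case Pp: (P p); case Pq: (P q) => // _.
  by apply: (exit_from _ _ Cpq); rewrite ?Pp ?Pq.
rewrite conn_sym in Cpq; have [u [v [Auv Cqu Cqv Pu nPv]]] := exit_from _ _ Cpq Pq (negbT Pp).
by exists u, v; split=> //; rewrite conn_sym in Cpq; apply: conn_trans Cpq _.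
Qed.

End Connectivity.

Definition inside (n : nat) (x y : 'I_n) : pred 'I_n := fun u => x < u < y.

Lemma cross_exit n (x y u v : 'I_n) : x < y -> inside x y u -> ~~ inside x y v ->
  v != x -> v != y -> cross (x, y) (mk_edge u v).
Proof.
rewrite /inside /cross /mk_edge -!val_eqE /= => xy /andP[xu uy] nv vx vy.
by case: ifP => /= uv; apply/orP; lia.
Qed.

Lemma cross_inside n (e f : 'I_n * 'I_n) :
  cross e f -> inside f.1 f.2 e.1 != inside f.1 f.2 e.2.
Proof. by rewrite /cross /inside; lia. Qed.

Section BondClosure.
Variables (n : nat) (G S : {set 'I_n * 'I_n}).
Hypothesis SG : S \subset G.

Definition bond_closure := [set e in G | conn S e.1 e.2].

Lemma subset_bond_closure : S \subset bond_closure.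
Proof. by apply/subsetP => e Se; rewrite inE (subsetP SG) ?conn_edge. Qed.

Lemma conn_bond_closure : conn bond_closure =2 conn S.
Proof.
move=> x y; apply/idP/idP; last exact: conn_sub subset_bond_closure.
apply: connect_sub => u v /orP[] /setIdP[_ Cuv] //; change (conn S u v).
by rewrite conn_sym.
Qed.

Lemma bond_closure_bond : bond G bond_closure.
Proof.
apply/andP; split; first by apply/subsetP => e /setIdP[].
by apply/forall_inP => e Ge; apply/implyP; rewrite conn_bond_closure inE Ge.
Qed.

Lemma bond_closure_min K : bond G K -> S \subset K -> bond_closure \subset K.
Proof.
case/andP=> _ /forall_inP bondK SK; apply/subsetP => e /setIdP[Ge CSe].
exact: implyP (bondK e Ge) (conn_sub SK CSe).
Qed.

End BondClosure.

Lemma singletons_subset (T : finType) (S K : {set T}) :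
  (forall e, e \in S -> [set e] \subset K) <-> S \subset K.
Proof.
split=> [sub | /subsetP SK e Se]; last by rewrite sub1set SK.
by apply/subsetP => e /sub; rewrite sub1set.
Qed.

Lemma bond_closure_join n (G S : {set 'I_n * 'I_n}) :
  S \subset G -> is_join_in (bond G) S (bond_closure G S).
Proof.
move=> SG; split; first exact: bond_closure_bond.
  exact/singletons_subset/subset_bond_closure.
by move=> K bondK /singletons_subset; apply: bond_closure_min.
Qed.

Lemma is_join_in_sub n (P Q : {set 'I_n * 'I_n} -> bool) S J :
  (forall K, Q K -> P K) -> Q J -> is_join_in P S J -> is_join_in Q S J.
Proof. by move=> QP QJ [_ SJ Jmin]; split=> // K /QP; apply: Jmin. Qed.

Section NoncrossingEdges.
Variables (n : nat) (S : {set 'I_n * 'I_n}).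
Hypothesis S_sorted : forall e, e \in S -> e.1 < e.2.
Hypothesis S_noncrossing : forall e f, e \in S -> f \in S -> ~~ cross e f.

Lemma mk_edge_adj u v : adj S u v -> mk_edge u v \in S.
Proof.
rewrite /mk_edge; case/orP => Se; have := S_sorted Se => /= lt.
  by rewrite lt.
by rewrite ltnNge ltnW.
Qed.

Lemma conn_inside_edge e p q : e \in S -> conn S p q -> ~~ conn S e.1 p ->
  inside e.1 e.2 p = inside e.1 e.2 q.
Proof.
case: e => x y /= Se Cpq nCxp; apply/eqP/negPn/negP.
case/(conn_exit Cpq) => u [v [Auv _ Cpv iu nv]].
have Cxy : conn S x y := conn_edge Se.
have vx : v != x by apply: contraNneq nCxp => vx; rewrite conn_sym -vx.
have vy : v != y.
  by apply: contraNneq nCxp => vy; rewrite (conn_trans Cxy) // conn_sym -vy.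
have := cross_exit (S_sorted Se) iu nv vx vy.
by apply/negP/S_noncrossing/mk_edge_adj.
Qed.

Theorem conn_noncrossing (a b c d : 'I_n) : a < b -> b < c -> c < d ->
  conn S a c -> conn S b d -> conn S a b.
Proof.
move=> ab bc cd Cac Cbd; apply/contraT => nCab.
have nCba : ~~ conn S b a by rewrite conn_sym.
have Pbd : inside a c b != inside a c d by rewrite /inside; lia.
have [u [v [Auv Cbu Cbv iu nv]]] := conn_exit Cbd Pbd.
have va : v != a by apply: contraNneq nCba => <-.
have vc : v != c.
  by apply: contraNneq nCab => vc; rewrite (conn_trans Cac) // conn_sym -vc.
have Se := mk_edge_adj Auv; set e := mk_edge u v in Se.
have Cbe : conn S b e.1 by rewrite /e /mk_edge; case: ifP.
have nCea : ~~ conn S e.1 a by apply: contraNN nCba; apply: conn_trans.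
have := cross_inside (cross_exit (ltn_trans ab bc) iu nv va vc).
by rewrite (conn_inside_edge Se Cac nCea) eqxx.
Qed.

Lemma noncrossing_bond_closure (G : {set 'I_n * 'I_n}) : S \subset G ->
  noncrossing_bond G (bond_closure G S).
Proof.
move=> SG; rewrite /noncrossing_bond bond_closure_bond //=.
apply/existsP => -[a /existsP[b /existsP[c /existsP[d]]]].
rewrite !conn_bond_closure // => /and5P[ab bc cd Cac /andP[Cbd /negP[]]].
exact: conn_noncrossing ab bc cd Cac Cbd.
Qed.

End NoncrossingEdges.

Theorem lemma3p8 (n : nat) (G : {set 'I_n * 'I_n}) (le : rel ('I_n * 'I_n))
  (S : {set 'I_n * 'I_n}) :
  simple_graph G -> crossing_closed G -> total_order_on G le ->
  noncrossing_NBC G le S ->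
  exists J, is_join_in (bond G) S J /\ is_join_in (noncrossing_bond G) S J.
Proof.
move=> /forall_inP G_sorted _ _ [[SG _] S_noncrossing].
have S_sorted e : e \in S -> e.1 < e.2 by move/(subsetP SG)/G_sorted.
have join := bond_closure_join SG.
exists (bond_closure G S); split=> //.
apply: is_join_in_sub join => [K /andP[] //|].
exact: noncrossing_bond_closure.
Qed.
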